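(* Suppose that for every $m\ge 1$, any $2m$ mass distributions in $\mathbb{R}^2$ can be simultaneously bisected by an arrangement of $m$ lines. Then for every $n\ge 1$ and any $n$ valuation functions $v_1,\ldots,v_n$ on $[0,1]$, there exist at most $n$ cut points partitioning $[0,1]$ into at most $n+1$ intervals, each labeled ''$+$'' or ''$-$'' with consecutive intervals receiving different labels, such that $v_i(\mathcal{I}^+)=v_i(\mathcal{I}^-)$ for all $i$, where $\mathcal{I}^{\pm}$ is the union of the intervals labeled ''$\pm$''.
   Context: A mass distribution $\mu$ on $\mathbb{R}^d$ is a measure on $\mathbb{R}^d$ such that all open sets are measurable, $0<\mu(\mathbb{R}^d)<\infty$, and $\mu(S)=0$ for every subset $S$ contained in a lower-dimensional affine subspace (for $d=1$: every point has measure zero). A valuation function on $[0,1]$ is such a mass distribution supported on $[0,1]$. For an arrangement $A=(\ell_1,\ldots,\ell_m)$ of oriented lines in $\mathbb{R}^2$, let $R_i^+$ be the open positive side of $\ell_i$; $R^+(A)$ (resp. $R^-(A)$) is the set of points not on any $\ell_i$ lying in an even (resp. odd) number of the $R_i^+$. $A$ bisects a mass distribution $\mu$ if $\mu(R^+(A))=\mu(R^-(A))$. *)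

From HB Require Import structures.
From mathcomp Require Import all_boot all_order all_algebra.
From mathcomp Require Import all_classical all_reals all_analysis.
Set Implicit Arguments. Unset Strict Implicit. Unset Printing Implicit Defensive.
Import Order.TTheory GRing.Theory Num.Theory.
Local Open Scope classical_set_scope.
Local Open Scope ring_scope.

(* Measures are taken on the Borel sigma-algebras of R and of R^2 = R * R
   (product sigma-algebra, which is the Borel one). *)

Definition line_set {R : realType} (a b c : R) : set (R * R) :=
  [set p | a * p.1 + b * p.2 = c].

(** Mass distribution on R^2. Lower-dimensional affine subspaces of R^2 are
    points and lines; every point lies on a line. *)
Definition mass_distribution2 {R : realType}
    (mu : {measure set (R * R) -> \bar R}) : Prop :=
  (0 < mu setT)%E /\ (mu setT < +oo)%E /\
  (forall S : set (R * R), measurable S ->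
     (exists a b c : R, (a != 0 \/ b != 0) /\ S `<=` line_set a b c) ->
     mu S = 0%E).

Definition mass_distribution1 {R : realType}
    (mu : {measure set R -> \bar R}) : Prop :=
  (0 < mu setT)%E /\ (mu setT < +oo)%E /\ (forall x : R, mu [set x] = 0%E).

Definition valuation_function {R : realType}
    (mu : {measure set R -> \bar R}) : Prop :=
  mass_distribution1 mu /\ mu (~` [set x : R | 0 <= x <= 1]) = 0%E.

(** An oriented line is a triple (a, b, c) with (a, b) <> (0, 0); its open
    positive side is { p | a p.1 + b p.2 > c }. *)
Definition oriented_line {R : realType} (l : R * R * R) : Prop :=
  l.1.1 != 0 \/ l.1.2 != 0.

Definition on_line {R : realType} (l : R * R * R) (p : R * R) : bool :=
  l.1.1 * p.1 + l.1.2 * p.2 == l.2.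

Definition pos_side {R : realType} (l : R * R * R) (p : R * R) : bool :=
  l.1.1 * p.1 + l.1.2 * p.2 > l.2.

Definition Rplus {R : realType} {m : nat} (A : 'I_m -> R * R * R) : set (R * R) :=
  [set p | (forall i, ~~ on_line (A i) p) /\
           ~~ odd #|[set i : 'I_m | pos_side (A i) p]|].

Definition Rminus {R : realType} {m : nat} (A : 'I_m -> R * R * R) : set (R * R) :=
  [set p | (forall i, ~~ on_line (A i) p) /\
           odd #|[set i : 'I_m | pos_side (A i) p]|].

Definition bisects {R : realType} {m : nat} (A : 'I_m -> R * R * R)
    (mu : {measure set (R * R) -> \bar R}) : Prop :=
  mu (Rplus A) = mu (Rminus A).

(** Cut points t = [t_1; ...; t_k] with 0 < t_1 < ... < t_k < 1 partition [0,1]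
    into the k+1 intervals J_0, ..., J_k, where with t_0 = 0, t_(k+1) = 1:
    J_j = [t_j, t_(j+1)) for j < k and J_k = [t_k, 1]. *)
Definition cut_ends {R : realType} (t : seq R) : seq R := 0 :: rcons t 1.

Definition piece {R : realType} (t : seq R) (j : nat) : set R :=
  let e := cut_ends t in
  if (j < size t)%N then [set x | e`_j <= x < e`_j.+1]
  else [set x | e`_j <= x <= e`_j.+1].

(** Union of the intervals whose label (true = "+", false = "-") is b. *)
Definition labeled_union {R : realType} (t : seq R) (lab : nat -> bool)
    (b : bool) : set R :=
  \bigcup_(j in [set j : nat | (j <= size t)%N /\ lab j = b]) piece t j.

From HB Require Import structures.
From mathcomp Require Import all_boot all_order all_algebra.
From mathcomp Require Import all_classical all_reals all_analysis.
From mathcomp Require Import polyrcf measurable_realfun ring zify.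
Import Order.TTheory GRing.Theory Num.Theory.
Local Open Scope classical_set_scope.
Local Open Scope ring_scope.
Set Implicit Arguments. Unset Strict Implicit. Unset Printing Implicit Defensive.

(* Each v_i is placed on the arc u |-> (u, u^2), 0 < u < 1, of the parabola;
   when n is odd the spare measure is a copy of v_1 on the arc over (2, 3).
   A line a x + b y = c meets the parabola where the quadratic a u + b u^2 - c
   vanishes, so along the parabola the side of the arrangement (the parity of
   the number of positive sides) can only change at the roots of the product
   P of these m quadratics, a nonzero polynomial of degree at most 2m.  The
   sign changes of this parity in (0, 1) are the cut points: the labelling
   agrees with the arrangement off a finite set, so it bisects every v_i.
   For n odd, 2m = n + 1, but bisecting the spare arc forces a root of P in
   [2, 3], leaving at most n roots in (0, 1). *)

Section cut_points.
Variable R : realFieldType.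

Lemma count_le_eq0 (t : seq R) x : {in t, forall w, x < w} ->
  count (fun w => w <= x) t = 0%N.
Proof.
move=> xt; apply/eqP; rewrite -leqn0 leqNgt -has_count.
by apply/hasPn => w /xt; rewrite -ltNge.
Qed.

(* [piece t j] with its left end 0 replaced by [a], so that induction on [t]
   can drop the first cut point. *)
Definition piece_from (a : R) (t : seq R) (j : nat) : set R :=
  let e := a :: rcons t 1 in
  if (j < size t)%N then [set x | e`_j <= x < e`_j.+1]
  else [set x | e`_j <= x <= e`_j.+1].

Lemma piece_fromP a t j x : sorted <%R (a :: rcons t 1) ->
  ((j <= size t)%N /\ piece_from a t j x) <->
  (a <= x <= 1 /\ j = count (fun w => w <= x) t).
Proof.
elim: t a j => [|z t IH] a j /=; first by case: j => [|j] _; split=> -[].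
move=> /andP[az sorted_zt].
have zt : {in rcons t 1, forall w, z < w}.
  by apply/allP; move: sorted_zt; rewrite path_sortedE //; [case/andP | exact: lt_trans].
have z1 : z < 1 by apply: zt; rewrite mem_rcons mem_head.
have below_z y : y < z -> count (fun w => w <= y) t = 0%N.
  move=> yz; apply: count_le_eq0 => w wt.
  by rewrite (lt_trans yz) // zt // mem_rcons inE wt orbT.
case: j => [|j].
  rewrite /piece_from /=; split=> [[_ /andP[ax xz]] | [/andP[ax x1]]].
    by rewrite ax (le_trans (ltW xz) (ltW z1)) leNgt xz below_z.
  by case: (ltP x z) => [xz _ | zx /eqP]; rewrite ?ax.
have -> : piece_from a (z :: t) j.+1 = piece_from z t j by [].
rewrite ltnS (IH z j sorted_zt); split=> [[/andP[zx x1] ->]| [/andP[ax x1]]].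
  by rewrite (le_trans (ltW az) zx) x1 zx.
by case: (ltP x z) => [/below_z -> | zx [->]] //; rewrite zx x1.
Qed.

Lemma constant_on_itv (s : R -> bool) a b :
  (forall x y, a < x -> x <= y -> y < b -> s x = s y) ->
  {in `]a, b[, forall x, s x = s ((a + b) / 2)}.
Proof.
move=> s_const x; rewrite in_itv => /andP[ax xb].
have [am mb] := midf_lt (lt_trans ax xb).
case: (leP x ((a + b) / 2)) => [xm | mx]; first exact: s_const.
by apply/esym/s_const => //; exact: ltW.
Qed.

Lemma locally_constant_parity (s : R -> bool) (Z : seq R) (a : R) :
  sorted <%R (a :: Z) -> all (fun z => z < 1) Z ->
  (forall x y, a < x -> x <= y -> y < 1 ->
     {in Z, forall z, (z < x) || (y < z)} -> s x = s y) ->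
  exists t b, subseq t Z /\
    forall x, a < x < 1 -> x \notin Z ->
      s x = b (+) odd (count (fun w => w <= x) t).
Proof.
elim: Z a => [|z Z IH] a sorted_aZ Z1 s_const.
  exists [::], (s ((a + 1) / 2)); split=> // x ax1 _.
  rewrite addbF (@constant_on_itv s a 1) ?in_itv // => y y' ay yy' y'1.
  by apply: s_const => // w; rewrite in_nil.
move: sorted_aZ Z1 => /= /andP[az sorted_zZ] /andP[z1 Z1].
have zZ : {in Z, forall w, z < w}.
  by apply/allP; move: sorted_zZ; rewrite path_sortedE //; [case/andP | exact: lt_trans].
have [t [b [tZ s_par]]] : exists t b, subseq t Z /\ forall x, z < x < 1 ->
    x \notin Z -> s x = b (+) odd (count (fun w => w <= x) t).
  apply: IH => // x y zx xy y1 xyZ; apply: s_const => //; first exact: lt_trans zx.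
  by move=> w; rewrite inE => /predU1P[-> | /xyZ]; [rewrite zx |].
have s_left : {in `]a, z[, forall x, s x = s ((a + z) / 2)}.
  apply: constant_on_itv => x y ax xy yz; apply: s_const => //; first exact: lt_trans z1.
  move=> w; rewrite inE => /predU1P[-> | /zZ zw]; first by rewrite yz orbT.
  by rewrite (lt_trans yz zw) orbT.
pose c := s ((a + z) / 2).
pose t' := if c == b then t else z :: t.
have t'_sub : {subset t' <= z :: t}.
  by rewrite /t'; case: ifP => _ // w wt; rewrite inE wt orbT.
exists t', c; split.
  by rewrite /t'; case: eqP => _; [exact: subseq_trans tZ (subseq_cons Z z) | rewrite /= eqxx].
move=> x /andP[ax x1]; rewrite inE negb_or => /andP[xz xZ].
have [zx | xlez] := ltP z x; last first.
  have xltz : x < z by rewrite lt_neqAle xz xlez.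
  rewrite s_left ?in_itv /= ?ax ?xltz // count_le_eq0 ?addbF // => w /t'_sub.
  by move=> /predU1P[-> // | /(mem_subseq tZ) /zZ]; exact: lt_trans.
rewrite s_par ?zx ?x1 // /t'; case: eqP => [-> // | /eqP cb].
by rewrite /= (ltW zx) add1n oddS; move: cb; case: (c); case: (b); case: (odd _).
Qed.
End cut_points.

Lemma labeled_unionP (R : realType) (t : seq R) lab b x :
  sorted <%R (cut_ends t) ->
  labeled_union t lab b x <-> 0 <= x <= 1 /\ lab (count (fun w => w <= x) t) = b.
Proof.
move=> sorted_t; split=> [[j [jt <-] xj] | [x01 <-]].
  by have [-> <-] := (piece_fromP j x sorted_t).1 (conj jt xj).
have [jt xj] := (piece_fromP _ x sorted_t).2 (conj x01 erefl).
by exists (count (fun w => w <= x) t).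
Qed.

Lemma measurable_labeled_union (R : realType) (t : seq R) lab b :
  measurable (labeled_union t lab b).
Proof.
apply: bigcup_measurable => j _; rewrite /piece; set a := _`_j; set c := _`_j.+1.
by case: ifP => _; [exact: measurable_itv `[a, c[ | exact: measurable_itv `[a, c]].
Qed.

Lemma size_roots_lt (R : rcfType) (p : {poly R}) a b : p != 0 ->
  (size (roots p a b) < size p)%N.
Proof.
move=> p0; apply: max_poly_roots => //; last exact/lt_sorted_uniq/sorted_roots.
by apply/allP => x; rewrite -(roots_on_roots _ _ p0) => /andP[].
Qed.

Lemma size_roots_ltS (R : rcfType) (p : {poly R}) a b r : p != 0 ->
  root p r -> r \notin `]a, b[ -> ((size (roots p a b)).+1 < size p)%N.
Proof.
move=> p0 pr rab; rewrite -(size_rcons _ r); apply: max_poly_roots => //.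
  rewrite all_rcons pr; apply/allP => x.
  by rewrite -(roots_on_roots _ _ p0) => /andP[].
rewrite rcons_uniq (lt_sorted_uniq (sorted_roots _ _ _)) andbT.
by apply: contra rab; rewrite -(roots_on_roots _ _ p0) => /andP[].
Qed.

Section parabola.
Variable R : realType.

Definition parabola (u : R) : R * R := (u, u ^+ 2).

Definition line_poly (l : R * R * R) : {poly R} := Poly [:: - l.2; l.1.1; l.1.2].

Lemma line_polyE l u : (line_poly l).[u] = l.1.1 * u + l.1.2 * u ^+ 2 - l.2.
Proof. by rewrite /line_poly /= !horner_cons horner0; ring. Qed.

Lemma line_poly_neq0 l : oriented_line l -> line_poly l != 0.
Proof.
move=> l_ab; apply/eqP => l0.
have := coef_Poly [:: - l.2; l.1.1; l.1.2]; rewrite -/(line_poly l) l0 => coefs.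
have := coefs 1%N; have := coefs 2%N; rewrite !coef0 /= => b0 a0.
by case: l_ab; rewrite -?a0 -?b0 eqxx.
Qed.

Lemma size_line_poly l : (size (line_poly l) <= 3)%N.
Proof. exact: size_Poly. Qed.

Lemma pos_side_parabola l u : pos_side l (parabola u) = (0 < (line_poly l).[u]).
Proof. by rewrite /pos_side line_polyE subr_gt0. Qed.

Lemma on_line_parabola l u : on_line l (parabola u) = root (line_poly l) u.
Proof. by rewrite /on_line rootE line_polyE subr_eq0. Qed.

End parabola.

Section arrangement.
Variables (R : realType) (m : nat) (A : 'I_m -> R * R * R).
Hypothesis oriented_A : forall i, oriented_line (A i).

Definition arrangement_poly : {poly R} := \prod_(i < m) line_poly (A i).

Lemma arrangement_poly_neq0 : arrangement_poly != 0.
Proof. by apply/prodf_neq0 => i _; exact: line_poly_neq0. Qed.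

Lemma size_arrangement_poly : (size arrangement_poly <= (2 * m).+1)%N.
Proof.
have := size_poly_prod_leq (fun i : 'I_m => true) (fun i => line_poly (A i)).
move/leq_trans; apply; rewrite leq_subLR card_ord addnS ltnS.
apply: (@leq_trans (\sum_(i < m) 3)); first by apply: leq_sum => i _; exact: size_line_poly.
by rewrite sum_nat_const card_ord; lia.
Qed.

Lemma noroot_line_poly u i : ~~ root arrangement_poly u -> ~~ root (line_poly (A i)) u.
Proof. by rewrite /root horner_prod => /prodf_neq0; apply. Qed.

Definition parabola_parity (u : R) : bool :=
  odd #|[set i : 'I_m | pos_side (A i) (parabola u)]|.

Lemma Rplus_parabola u : ~~ root arrangement_poly u ->
  Rplus A (parabola u) <-> ~~ parabola_parity u.
Proof.
move=> Pu; split=> [[] // | even_u]; split=> // i.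
by rewrite on_line_parabola noroot_line_poly.
Qed.

Lemma Rminus_parabola u : ~~ root arrangement_poly u ->
  Rminus A (parabola u) <-> parabola_parity u.
Proof.
move=> Pu; split=> [[] // | odd_u]; split=> // i.
by rewrite on_line_parabola noroot_line_poly.
Qed.

Lemma parabola_parity_itv (I : interval R) : {in I, forall x, ~~ root arrangement_poly x} ->
  {in I &, forall x y, parabola_parity x = parabola_parity y}.
Proof.
move=> P_I x y xI yI; congr (odd #|_|); apply/funext => i /=.
have Ai : {in I, forall w, ~~ root (line_poly (A i)) w}.
  by move=> w /P_I; exact: noroot_line_poly.
by rewrite !pos_side_parabola -!sgr_cp0 (polyrN0_itv Ai yI xI).
Qed.

Lemma arrangement_cut_points : exists (t : seq R) (lab : nat -> bool),
  [/\ subseq t (roots arrangement_poly 0 1), sorted <%R (cut_ends t),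
      (forall j, lab j != lab j.+1) &
      forall x b, 0 < x < 1 -> x \notin roots arrangement_poly 0 1 ->
        labeled_union t lab b x <-> (if b then Rplus A else Rminus A) (parabola x)].
Proof.
set P := arrangement_poly; set Z := roots P 0 1.
have Z_on : roots_on P `]0, 1[ Z := roots_on_roots 0 1 arrangement_poly_neq0.
have Z01 z : z \in Z -> 0 < z < 1 by rewrite -Z_on in_itv => /andP[].
have [t [b0 [tZ parity_t]]] : exists t b, subseq t Z /\ forall x, 0 < x < 1 ->
    x \notin Z -> parabola_parity x = b (+) odd (count (fun w => w <= x) t).
  apply: locally_constant_parity; first exact: path_roots.
    by apply/allP => z /Z01 /andP[].
  move=> x y x0 xy y1 xyZ; apply: (@parabola_parity_itv `[x, y]);
    rewrite ?in_itv /= ?lexx ?xy // => w; rewrite in_itv /= => /andP[xw wy].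
  apply/negP => Pw.
  have /xyZ : w \in Z by rewrite -Z_on in_itv /= Pw (lt_le_trans x0 xw) (le_lt_trans wy y1).
  by rewrite ltNge xw ltNge wy.
have sorted_t : sorted <%R (cut_ends t).
  rewrite /= rcons_path (subseq_path lt_trans tZ (path_roots _ _ _)).
  have := mem_last 0 t; rewrite inE => /predU1P[-> | /(mem_subseq tZ) /Z01 /andP[_ ->]] //.
  exact: ltr01.
exists t, (fun j => ~~ (b0 (+) odd j)); split => // [j | x b x01 xZ].
  by rewrite oddS addbN negbK; case: (_ (+) _).
have Px : ~~ root P x by apply: contra xZ; rewrite -Z_on in_itv /= x01.
rewrite labeled_unionP // -parity_t //; case/andP: x01 => x0 x1.
by case: b; [rewrite Rplus_parabola | rewrite Rminus_parabola];
  by rewrite // (ltW x0) (ltW x1); case: (parabola_parity x); split=> // -[].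
Qed.

Lemma size_arrangement_roots a b : (size (roots arrangement_poly a b) <= 2 * m)%N.
Proof.
rewrite -ltnS.
exact: leq_trans (size_roots_lt a b arrangement_poly_neq0) size_arrangement_poly.
Qed.

Lemma size_arrangement_roots_lt a b r : root arrangement_poly r -> r \notin `]a, b[ ->
  (size (roots arrangement_poly a b) < 2 * m)%N.
Proof.
move=> Pr rab; rewrite -ltnS.
exact: leq_trans (size_roots_ltS arrangement_poly_neq0 Pr rab) size_arrangement_poly.
Qed.

End arrangement.

Section valuation.
Variable R : realType.

Lemma measurable_fin_subset (X : set R) (l : seq R) : X `<=` [set` l] -> measurable X.
Proof.
move=> Xl; apply: countable_measurable; first exact: measurable_set1.
exact/finite_set_countable/(sub_finite_set Xl)/finite_seq.
Qed.

Lemma measurable_set_seq (l : seq R) : measurable [set` l].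
Proof. exact: (measurable_fin_subset (@subset_refl _ _)). Qed.

Variable v : {measure set R -> \bar R}.
Hypothesis v_val : valuation_function v.

Lemma valuation_seq0 (l : seq R) : v [set` l] = 0%E.
Proof.
have [[_ [_ v1]] _] := v_val.
elim: l => [|x l IH]; first by rewrite set_nil measure0.
have -> : [set` x :: l] = [set x] `|` [set` l].
  by rewrite predeqE => y /=; rewrite inE; split=> [/predU1P | [-> | ->]]; rewrite ?eqxx ?orbT.
by rewrite null_set_setU ?v1 // ?measurable_set1 //; exact: measurable_set_seq.
Qed.

Lemma valuation_outside_open01 : v (~` `]0, 1[) = 0%E.
Proof.
have [_ v_supp] := v_val.
have m01 : measurable (~` [set x : R | 0 <= x <= 1]).
  exact: measurableC (measurable_itv `[0, 1]).
apply: (@subset_measure0 _ _ _ v _ (~` [set x : R | 0 <= x <= 1] `|` [set` [:: 0; 1]])).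
- exact: measurableC.
- exact: measurableU m01 (measurable_set_seq _).
- move=> x /= x01; case: (boolP (0 <= x <= 1)) => [/andP[x0 x1] | /negP]; [right | by left].
  rewrite !inE; move: x01; rewrite in_itv /= !lt_neqAle x0 x1 !andbT eq_sym.
  by case: eqP; case: eqP.
- by apply: null_set_setU; rewrite ?valuation_seq0 //; exact: measurable_set_seq.
Qed.

Lemma valuation_open01_gt0 : (0 < v `]0%R, 1%R[%classic)%E.
Proof.
have [[v_pos _] _] := v_val.
by rewrite -(measureU0 _ _ valuation_outside_open01) ?setUv //; exact: measurableC.
Qed.

Lemma valuation_eq_off_finite (X Y : set R) (l : seq R) :
  measurable X -> Y `<=` `]0, 1[ ->
  (forall x, 0 < x < 1 -> x \notin l -> X x <-> Y x) -> v X = v Y.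
Proof.
move=> mX Y01 XY; set N := ~` `]0, 1[ `|` [set` l].
have mN : measurable N.
  by apply: measurableU; [exact: measurableC | exact: measurable_set_seq].
have vN : v N = 0%E.
  apply: null_set_setU; rewrite ?valuation_outside_open01 ?valuation_seq0 //.
    exact: measurableC.
  exact: measurable_set_seq.
have XYN : X `\` N = Y `\` N.
  rewrite predeqE => x; split=> -[xXY xN]; split=> //;
  move/not_orP: xN => [/contrapT]; rewrite /= in_itv /= => x01 /negP xl;
  by apply/(XY x x01 xl).
have mY : measurable Y.
  rewrite (_ : Y = (X `\` N) `|` (Y `&` [set` l])); last first.
    rewrite XYN predeqE => x; split=> [Yx | [[Yx _] | [Yx _]]] //.
    by case: (pselect ([set` l] x)) => xl; [right | left; split=> // -[/(_ (Y01 _ Yx)) |]].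
  by apply: measurableU; [exact: measurableD | apply: measurable_fin_subset (@subIsetr _ _ _)].
have v_offN Z : measurable Z -> v Z = v (Z `\` N).
  move=> mZ; have mZN : measurable (Z `&` N) by exact: measurableI.
  by rewrite (measureDI v mZ mN) (subset_measure0 mZN mN (@subIsetr _ Z N) vN) adde0.
by rewrite v_offN // XYN -v_offN.
Qed.

End valuation.

Section arc_measure.
Variable R : realType.

Lemma measurable_parabola_shift (s : R) :
  measurable_fun setT (fun u : R => parabola (u + s)).
Proof.
apply: measurable_fun_pair => /=.
  by apply: measurable_funD => //; exact: measurable_cst.
by apply: measurable_funX; apply: measurable_funD => //; exact: measurable_cst.
Qed.

Section definition.
Variables (v : {measure set R -> \bar R}) (s : R).

Definition arc_measure (B : set (R * R)) : \bar R :=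
  v ((fun u => parabola (u + s)) @^-1` B `&` `]0, 1[).

(* The library's pushforward is a measure only given the measurability proof
   of the map, so its instance has to be named. *)
Let arc_pushforward := measure_function_pushforward__canonical__measure_function_Measure
  (mrestr v (measurable_itv `]0, 1[)) (measurable_parabola_shift s).

Let arc_measure0 : arc_measure set0 = 0%E := measure0 arc_pushforward.
Let arc_measure_ge0 B : (0 <= arc_measure B)%E := measure_ge0 arc_pushforward B.
Let arc_measure_sigma_additive : semi_sigma_additive arc_measure :=
  @measure_semi_sigma_additive _ _ _ arc_pushforward.

HB.instance Definition _ := isMeasure.Build _ _ _ arc_measure
  arc_measure0 arc_measure_ge0 arc_measure_sigma_additive.

End definition.

Lemma arc_measureE (v : {measure set R -> \bar R}) s B :
  (arc_measure v s : {measure set (R * R) -> \bar R}) B =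
  v ((fun u => parabola (u + s)) @^-1` B `&` `]0, 1[).
Proof. by []. Qed.

Lemma measurable_arc_preimage (s : R) (B : set (R * R)) : measurable B ->
  measurable ((fun u => parabola (u + s)) @^-1` B `&` `]0, 1[).
Proof.
move=> mB; apply: measurableI => //.
by rewrite -[X in measurable X]setTI; exact: measurable_parabola_shift.
Qed.

Lemma arc_measure_mass (v : {measure set R -> \bar R}) s :
  valuation_function v -> mass_distribution2 (arc_measure v s).
Proof.
move=> v_val; have [[_ [v_fin _]] _] := v_val.
split; [|split].
- by rewrite arc_measureE preimage_setT setTI valuation_open01_gt0.
- apply: le_lt_trans v_fin; rewrite arc_measureE; apply: le_measure; rewrite ?inE //.
  exact: measurable_arc_preimage.
- move=> S mS [a [b [c [ab Sl]]]].
  have q0 : line_poly (a, b, c) != 0 by exact: line_poly_neq0.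
  rewrite arc_measureE; apply: (subset_measure0 (measurable_arc_preimage s mS)
    (measurable_set_seq [seq z - s | z <- rootsR (line_poly (a, b, c))])).
    move=> u [/Sl Su _]; apply/mapP; exists (u + s); last by rewrite addrK.
    by rewrite -(roots_on_rootsR q0) in_itv /= rootE line_polyE /= Su subrr.
  exact: valuation_seq0.
Qed.

End arc_measure.

Section bisected_arc.
Variables (R : realType) (m : nat) (A : 'I_m -> R * R * R).
Variable v : {measure set R -> \bar R}.
Hypothesis v_val : valuation_function v.

Lemma bisected_arc_root s : bisects A (arc_measure v s) ->
  exists2 r, s <= r <= s + 1 & root (arrangement_poly A) r.
Proof.
move=> bis.
have [exists_r | no_root] :=
  pselect (exists2 r, s <= r <= s + 1 & root (arrangement_poly A) r); first exact: exists_r.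
have P_arc : {in `[s, s + 1], forall r, ~~ root (arrangement_poly A) r}.
  by move=> r; rewrite in_itv /= => r_in; apply/negP => Pr; apply: no_root; exists r.
pose c := parabola_parity A s.
have arc_side (b : bool) : (fun u => parabola (u + s)) @^-1` (if b then Rplus A else Rminus A)
    `&` `]0, 1[ = if b (+) c then `]0, 1[%classic else set0.
  rewrite predeqE => u /=; have [u01 | u01] := boolP (u \in `]0, 1[).
    have us : u + s \in `[s, s + 1].
      move: u01; rewrite !in_itv /= => /andP[u0 u1].
      by rewrite lerDr (ltW u0) addrC lerD2l (ltW u1).
    have s_in : s \in `[s, s + 1] by rewrite in_itv /= lexx lerDl ler01.
    have Pus := P_arc _ us.
    rewrite -[c](parabola_parity_itv P_arc us s_in).
    by case: b; [rewrite Rplus_parabola | rewrite Rminus_parabola] => //;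
      case: (parabola_parity A (u + s)) => /=; split=> [[] | ] //.
  by split=> [[_ //] | ]; case: ifP => _ => [/(negP u01) | []].
have := valuation_open01_gt0 v_val; move: bis.
rewrite /bisects !arc_measureE (arc_side true) (arc_side false).
by case: (c) => /= [<- | ->]; rewrite measure0 ltxx.
Qed.

Lemma bisected_arc_valuation (F : bool -> set R) (l : seq R) :
  (forall b, measurable (F b)) ->
  (forall x b, 0 < x < 1 -> x \notin l ->
     F b x <-> (if b then Rplus A else Rminus A) (parabola x)) ->
  bisects A (arc_measure v 0) -> v (F true) = v (F false).
Proof.
move=> mF F_side bis.
have F_arc b : v (F b) = arc_measure v 0 (if b then Rplus A else Rminus A).
  rewrite arc_measureE.
  apply: (valuation_eq_off_finite v_val (mF b)) => [x [] // | x x01 xl].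
  by rewrite /= addr0 (F_side _ _ x01 xl); split=> [Fx | []] //; split; rewrite ?in_itv.
by rewrite !F_arc.
Qed.

End bisected_arc.

Theorem lemma2p1 (R : realType) :
  (forall m : nat, (1 <= m)%N ->
     forall mus : 'I_(2 * m) -> {measure set (R * R) -> \bar R},
       (forall j, mass_distribution2 (mus j)) ->
       exists A : 'I_m -> R * R * R,
         (forall i, oriented_line (A i)) /\ (forall j, bisects A (mus j))) ->
  forall n : nat, (1 <= n)%N ->
  forall v : 'I_n -> {measure set R -> \bar R},
    (forall i, valuation_function (v i)) ->
    exists (t : seq R) (lab : nat -> bool),
      [/\ (size t <= n)%N,
          sorted <%R (cut_ends t),
          (forall j, (j < size t)%N -> lab j != lab j.+1) &
          forall i, v i (labeled_union t lab true) = v i (labeled_union t lab false)].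
Proof.
move=> bisect_2m [//|n'] _ v v_val; set n := n'.+1; set m := uphalf n.
pose mus (j : 'I_(2 * m)) := arc_measure (v (insubd ord0 j)) (if (j < n)%N then 0 else 2).
have [A [A_or A_bis]] := bisect_2m m isT mus (fun j => arc_measure_mass _ (v_val _)).
have [t [lab [tZ sorted_t lab_alt lab_side]]] := arrangement_cut_points A_or.
exists t, lab; split=> // [|i].
  apply: leq_trans (size_subseq tZ) _.
  have [n_odd | n_even] := boolP (odd n); last first.
    by apply: leq_trans (size_arrangement_roots A_or 0 1) _; rewrite mul2n even_uphalfK.
  have spare : (n < 2 * m)%N by rewrite mul2n odd_uphalfK.
  have := A_bis (Ordinal spare); rewrite /mus /= ltnn.
  case/(bisected_arc_root (v_val _)) => r /andP[r2 _] Pr; have r01 : r \notin `]0, 1[.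
    by rewrite in_itv /= negb_and -!leNgt (le_trans _ r2) ?orbT // ler1n.
  rewrite -ltnS; apply: leq_trans (size_arrangement_roots_lt A_or Pr r01) _.
  by rewrite mul2n odd_uphalfK.
have le_n_2m : (n <= 2 * m)%N by rewrite mul2n uphalfK leq_addl.
apply: (bisected_arc_valuation (v_val i) (measurable_labeled_union t lab) lab_side).
by have := A_bis (widen_ord le_n_2m i); rewrite /mus /= ltn_ord valKd.
Qed.
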